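(* Let $n\ge 1$ and let $P=P_1\otimes\cdots\otimes P_n\in\mathcal{P}_n$ satisfy $P^2=I$ and $P\neq\pm I$. Then there exists a unique $Z$-circuit $L$ on $n$ qubits such that $L\bullet P=Z\otimes I\otimes\cdots\otimes I$.
   Context: Matrices: $X=\begin{bmatrix}0&1\\1&0\end{bmatrix}$, $Z=\begin{bmatrix}1&0\\0&-1\end{bmatrix}$, $H=\frac{1}{\sqrt2}\begin{bmatrix}1&1\\1&-1\end{bmatrix}$, $CZ=\mathrm{diag}(1,1,1,-1)$. Operators on $n$ qubits act on $(\mathbb{R}^2)^{\otimes n}$, qubit $1$ being the first tensor factor; a one-qubit gate on qubit $i$, or a two-qubit gate on qubits $i,i+1$ (with qubit $i$ the first tensor factor of the gate, called its upper qubit, and $i+1$ its lower qubit), denotes that matrix tensored with identities on the other qubits. For matrices $C,P$, $C\bullet P=CPC^{-1}$. Real Pauli group: $\mathcal{P}_n=\{\pm(P_1\otimes\cdots\otimes P_n)\mid P_i\in\{I,X,Z,XZ\}\}$. A circuit is a finite sequence of gates $g_1,\dots,g_k$ ($g_1$ applied first); its operator is $g_k\cdots g_1$, and we write $L\bullet P$ for (operator of $L$)$\bullet P$. Derived generators (formal symbols, each with a defining gate sequence; within a two-qubit symbol, subscript $1$ is the upper and $2$ the lower qubit; gates separated by commas, '';'' separates steps): $A_1$ = empty, $A_2$ = $H$, $A_3$ = empty; $C_1$ = empty, $C_2$ = $H;Z;H$ (i.e. $X$); $B_1=B_5$ = $H_2;\,CZ;\,H_1,H_2;\,CZ;\,H_1,H_2;\,CZ$;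 $B_2=B_6$ = $CZ;\,H_1,H_2;\,CZ$; $B_3=B_7$ = $H_1;\,CZ;\,H_1,H_2;\,CZ$; $B_4=B_8$ = $H_2;\,CZ;\,H_2;\,CZ;\,H_1,H_2;\,CZ$. Symbols with equal defining sequences (e.g. $A_1,A_3$, or $B_1,B_5$) are nevertheless distinct symbols. Types: each of these symbols carries types from $\{\text{single},\text{double}\}$: $A_1,A_2$ have output type single and $A_3$ output type double; $B_j$ has an input type (on its lower qubit) and an output type (on its upper qubit): $B_1,B_2,B_3$ single$\to$single, $B_4$ single$\to$double, $B_5,B_6,B_7$ double$\to$double, $B_8$ double$\to$single; $C_1,C_2$ have input type single. A $Z$-circuit on $n$ qubits is a sequence of symbols of the following form: for some $m\in\{1,\dots,n\}$, a symbol $A_a$ on qubit $m$, then $B_{b_{m-1}}$ on qubits $m-1,m$, then $B_{b_{m-2}}$ on qubits $m-2,m-1$, ..., then $B_{b_1}$ on qubits $1,2$, then $C_c$ on qubit $1$, such that the input type of each $B$ or $C$ symbol equals the output type of the symbol immediately preceding it in this sequence. Two $Z$-circuits are equal when they have the same $m$ and the same sequence of symbols. *)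

(* Real matrices are taken over an arbitrary real closed
   field R (this contains the real numbers; only sqrt 2 is needed). *)
From HB Require Import structures.
From mathcomp Require Import all_boot all_order all_algebra.
Set Implicit Arguments. Unset Strict Implicit. Unset Printing Implicit Defensive.
Import Order.TTheory GRing.Theory Num.Theory.
Local Open Scope ring_scope.

Section Qubits.
Variable R : rcfType.

Definition Xm : 'M[R]_2 := \matrix_(i, j) (if i == j then 0 else 1).
Definition Zm : 'M[R]_2 :=
  \matrix_(i, j) (if i == j then (if nat_of_ord i == 0%N then 1 else -1) else 0).
Definition Hm : 'M[R]_2 :=
  (Num.sqrt 2)^-1 *:
  \matrix_(i, j) (if (nat_of_ord i == 1%N) && (nat_of_ord j == 1%N) then -1 else 1).
Definition CZm : 'M[R]_4 :=
  \matrix_(i, j) (if i == j then (if nat_of_ord i == 3%N then -1 else 1) else 0).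

(* ---------- n-qubit operators: (R^2)^{tensor n}, dimension 2^n ----------
   Basis index i : 'I_(2^n); qubit k (1-based, 1 <= k <= n) is the binary
   digit of weight 2^(n-k), so qubit 1 is the first (most significant)
   tensor factor, exactly as in the Kronecker product convention. *)
Variable n : nat.
Definition bit (i : 'I_(2 ^ n)) (k : nat) : bool := odd (i %/ 2 ^ (n - k)).
Definition idx2 (b : bool) : 'I_2 := inord b.
Definition idx4 (b1 b2 : bool) : 'I_4 := inord (2 * b1 + b2).

(* tensor product P_1 (x) ... (x) P_n, factor l : 'I_n acting on qubit l+1 *)
Definition tens (fs : 'I_n -> 'M[R]_2) : 'M[R]_(2 ^ n) :=
  \matrix_(i, j) \prod_(l < n) fs l (idx2 (bit i l.+1)) (idx2 (bit j l.+1)).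

Definition oneq (k : nat) (g : 'M[R]_2) : 'M[R]_(2 ^ n) :=
  \matrix_(i, j) (g (idx2 (bit i k)) (idx2 (bit j k)) *
     \prod_(l < n | l.+1 != k) (bit i l.+1 == bit j l.+1)%:R).

Definition twoq (k : nat) (g : 'M[R]_4) : 'M[R]_(2 ^ n) :=
  \matrix_(i, j) (g (idx4 (bit i k) (bit i k.+1)) (idx4 (bit j k) (bit j k.+1)) *
     \prod_(l < n | (l.+1 != k) && (l.+1 != k.+1)) (bit i l.+1 == bit j l.+1)%:R).

(* operator of a circuit g_1, ..., g_k (g_1 applied first): g_k ... g_1 *)
Definition circ_op (gs : seq 'M[R]_(2 ^ n)) : 'M[R]_(2 ^ n) :=
  foldl (fun acc g => g *m acc) 1%:M gs.

(* C \bullet P = C P C^{-1} *)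
Definition conjm (C P : 'M[R]_(2 ^ n)) : 'M[R]_(2 ^ n) := C *m P *m invmx C.

Inductive pauli := pI | pX | pZ | pXZ.
Definition pmat (p : pauli) : 'M[R]_2 :=
  match p with pI => 1%:M | pX => Xm | pZ => Zm | pXZ => Xm *m Zm end.
Definition in_real_pauli (P : 'M[R]_(2 ^ n)) : Prop :=
  exists (s : bool) (ps : 'I_n -> pauli),
    P = (-1) ^+ s *: tens (fun l => pmat (ps l)).

Definition Z1 : 'M[R]_(2 ^ n) :=
  tens (fun l => if nat_of_ord l == 0%N then Zm else 1%:M).

Inductive ty := single | double.
Inductive Asym := A1 | A2 | A3.
Inductive Bsym := B1 | B2 | B3 | B4 | B5 | B6 | B7 | B8.
Inductive Csym := C1 | C2.

Definition A_out (a : Asym) : ty := match a with A1 | A2 => single | A3 => double end.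
Definition B_in (b : Bsym) : ty :=
  match b with B1 | B2 | B3 | B4 => single | _ => double end.
Definition B_out (b : Bsym) : ty :=
  match b with B1 | B2 | B3 | B8 => single | _ => double end.
Definition C_in (c : Csym) : ty := single.

Definition A_gates (m : nat) (a : Asym) : seq 'M[R]_(2 ^ n) :=
  match a with A2 => [:: oneq m Hm] | _ => [::] end.
Definition B_gates (k : nat) (b : Bsym) : seq 'M[R]_(2 ^ n) :=
  let H1 := oneq k Hm in let H2 := oneq k.+1 Hm in let CZ := twoq k CZm in
  match b with
  | B1 | B5 => [:: H2; CZ; H1; H2; CZ; H1; H2; CZ]
  | B2 | B6 => [:: CZ; H1; H2; CZ]
  | B3 | B7 => [:: H1; CZ; H1; H2; CZ]
  | B4 | B8 => [:: H2; CZ; H2; CZ; H1; H2; CZ]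
  end.
Definition C_gates (c : Csym) : seq 'M[R]_(2 ^ n) :=
  match c with C1 => [::] | C2 => [:: oneq 1 Hm; oneq 1 Zm; oneq 1 Hm] end.

(* ---------- Z-circuits ----------
   zm = m, za = a, zb = [:: b_1; ...; b_(m-1)] (b_k = nth (k-1), acting on
   qubits k, k+1), zc = c.  The symbols are applied in the order
   A_a, B_{b_(m-1)}, ..., B_{b_1}, C_c. *)
Record zcircuit := ZCircuit { zm : nat; za : Asym; zb : seq Bsym; zc : Csym }.

Definition zb_at (L : zcircuit) (k : nat) : Bsym := nth B1 (zb L) k.-1.
Definition out_ty (L : zcircuit) (k : nat) : ty :=
  if k == zm L then A_out (za L) else B_out (zb_at L k).

Definition is_zcircuit (L : zcircuit) : Prop :=
  [/\ (1 <= zm L <= n)%N,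
      size (zb L) = (zm L).-1,
      (forall k, (1 <= k < zm L)%N -> B_in (zb_at L k) = out_ty L k.+1)
    & C_in (zc L) = out_ty L 1].

Definition zgates (L : zcircuit) : seq 'M[R]_(2 ^ n) :=
  A_gates (zm L) (za L)
  ++ flatten [seq B_gates k (zb_at L k) | k <- rev (iota 1 (zm L).-1)]
  ++ C_gates (zc L).

End Qubits.

From Pilot Require Import Defs.
From HB Require Import structures.
From mathcomp Require Import all_boot all_order all_algebra.
From mathcomp Require Import ring zify.
From Stdlib Require Import FunctionalExtensionality.
Set Implicit Arguments. Unset Strict Implicit. Unset Printing Implicit Defensive.
Import Order.TTheory GRing.Theory Num.Theory.
Local Open Scope ring_scope.

(* Every operator involved is a product matrix [prodmx n f], whose (i, j)
   entry is the product over the qubits k of [f k] at the k-th bits of i and j;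
   such matrices multiply qubitwise.  Conjugating a signed Pauli operator by
   H, Z or CZ gives a signed Pauli operator read off a finite table, so the
   action of a circuit on Pauli operators is a symbolic computation on a sign
   and letters.  The symbol B_b on qubits (k, k+1) sends the letters
   (y_b, T in) to (T out, I), where T single = Z and T double = XZ; hence a
   Z-circuit L conjugates the Pauli operator [zpauli L] (the letter of A on
   qubit m, the letters y_b below it, a sign fixed by C) to Z (x) I ... (x) I.
   Conversely, P^2 = I means that P has an even number of XZ letters, which is
   the type condition on C, and P <> +-I gives a topmost nontrivial letter;
   taking as types the parities of the XZ letters from each qubit upwards
   yields L with [zpauli L] = P.  The letters of [zpauli L] determine L, and a
   signed Pauli operator determines its sign and letters (a trace
   computation), so L is unique because conjugation is injective. *)

Lemma all_flatten (T : Type) (p : pred T) (ss : seq (seq T)) :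
  all p (flatten ss) = all (all p) ss.
Proof. by elim: ss => //= s ss IH; rewrite all_cat IH. Qed.

Section Bits.
Variable n : nat.

Lemma bit_divn_eq (i j : 'I_(2 ^ n)) :
  (forall l : 'I_n, bit i l.+1 = bit j l.+1) ->
  forall d, (d <= n)%N -> (i %/ 2 ^ (n - d) = j %/ 2 ^ (n - d))%N.
Proof.
move=> eq_bits; elim=> [|d IHd] ltdn; first by rewrite subn0 !divn_small.
have := eq_bits (Ordinal ltdn); rewrite /bit /= => eq_bitd.
have := IHd (ltnW ltdn); rewrite -subnSK // expnSr !divnMA => eq_div.
rewrite (divn_eq (i %/ 2 ^ (n - d.+1)) 2) (divn_eq (j %/ 2 ^ (n - d.+1)) 2).
by rewrite eq_div !modn2 eq_bitd.
Qed.

Lemma bit_inj (i j : 'I_(2 ^ n)) :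
  (forall l : 'I_n, bit i l.+1 = bit j l.+1) -> i = j.
Proof.
move=> eq_bits; apply/val_inj.
by have := bit_divn_eq eq_bits (leqnn n); rewrite subnn expn0 !divn1.
Qed.

Definition bitvec (i : 'I_(2 ^ n)) : {ffun 'I_n -> bool} :=
  [ffun l : 'I_n => bit i l.+1].

Lemma bitvec_bij : bijective bitvec.
Proof.
apply: inj_card_bij; last by rewrite card_ffun card_bool !card_ord.
move=> i j /ffunP eq_vec; apply: bit_inj => l.
by have := eq_vec l; rewrite !ffunE.
Qed.

Lemma sum_prod_bits (R : comPzRingType) (F : 'I_n -> bool -> R) :
  \sum_(i < 2 ^ n) \prod_(l < n) F l (bit i l.+1) =
  \prod_(l < n) \sum_(b : bool) F l b.
Proof.
rewrite bigA_distr_bigA /= (reindex bitvec); last exact/onW_bij/bitvec_bij.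
by apply: eq_bigr => i _; apply: eq_bigr => l _; rewrite ffunE.
Qed.

End Bits.

Section ProductMatrix.
Variables (R : comPzRingType) (n : nat).

Definition prodmx (f : nat -> bool -> bool -> R) : 'M[R]_(2 ^ n) :=
  \matrix_(i, j) \prod_(l < n) f l.+1 (bit i l.+1) (bit j l.+1).

Lemma eq_prodmx f g :
  (forall l : 'I_n, forall a b, f l.+1 a b = g l.+1 a b) -> prodmx f = prodmx g.
Proof.
by move=> eq_fg; apply/matrixP => i j; rewrite !mxE; apply: eq_bigr => l _.
Qed.

Lemma mul_prodmx f g : prodmx f *m prodmx g =
  prodmx (fun k a b => f k a false * g k false b + f k a true * g k true b).
Proof.
apply/matrixP => i j; rewrite !mxE.
under eq_bigr do rewrite !mxE -big_split /=.
rewrite (sum_prod_bits (fun l c => f l.+1 (bit i l.+1) c * g l.+1 c (bit j l.+1))).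
by apply: eq_bigr => l _; rewrite big_bool /= addrC.
Qed.

Lemma prodmx_scalel (c : nat -> R) f :
  prodmx (fun k a b => c k * f k a b) = (\prod_(l < n) c l.+1) *: prodmx f.
Proof. by apply/matrixP => i j; rewrite !mxE big_split. Qed.

Lemma prodmx_delta : prodmx (fun _ a b => (a == b)%:R) = 1%:M.
Proof.
apply/matrixP => i j; rewrite !mxE; have [<-|neq_ij] := eqVneq i j.
  by rewrite big1 // => l _; rewrite eqxx.
have [l neq_l] : exists l : 'I_n, bit i l.+1 != bit j l.+1.
  apply/existsP; rewrite -negb_forall; apply: contra neq_ij => /forallP eq_bits.
  by apply/eqP/bit_inj => l; apply/eqP.
by rewrite (bigD1 l) //= (negbTE neq_l) mul0r.
Qed.

Lemma mxtrace_prodmx f :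
  \tr (prodmx f) = \prod_(l < n) (f l.+1 false false + f l.+1 true true).
Proof.
rewrite /mxtrace; under eq_bigr do rewrite mxE.
rewrite (sum_prod_bits (fun l c => f l.+1 c c)).
by apply: eq_bigr => l _; rewrite big_bool /= addrC.
Qed.

End ProductMatrix.
Definition pauli_eqb (p p' : pauli) : bool :=
  match p, p' with pI, pI | pX, pX | pZ, pZ | pXZ, pXZ => true | _, _ => false end.

Lemma pauli_eqP : Equality.axiom pauli_eqb.
Proof. by case; case; constructor. Qed.

HB.instance Definition _ := hasDecEq.Build pauli pauli_eqP.

Definition pentry {R : pzRingType} (p : pauli) (a b : bool) : R :=
  match p, a, b with
  | pI, false, false | pI, true, true => 1
  | pX, false, true | pX, true, false => 1
  | pZ, false, false => 1 | pZ, true, true => -1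
  | pXZ, false, true => -1 | pXZ, true, false => 1
  | _, _, _ => 0
  end.

Definition delta {R : pzRingType} (a b : bool) : R := (a == b)%:R.

Lemma pentry_pI (R : pzRingType) a b : pentry pI a b = delta a b :> R.
Proof. by case: a; case: b. Qed.

Definition cz_sign {R : pzRingType} (a b : bool) : R := if a && b then -1 else 1.

Section Entries.
Variable R : rcfType.

Lemma idx2K a : nat_of_ord (idx2 a) = a.
Proof. by rewrite /idx2 inordK //; case: a. Qed.

Lemma idx2_eq a b : (idx2 a == idx2 b) = (a == b).
Proof. by rewrite -val_eqE /= !idx2K; case: a; case: b. Qed.

Lemma pmat_entry p a b : pmat R p (idx2 a) (idx2 b) = pentry p a b.
Proof.
case: p => /=; rewrite ?mxE ?idx2_eq ?idx2K; try by case: a; case: b.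
rewrite big_ord_recr big_ord1 /= !mxE.
have e0 : widen_ord (leqnSn 1) ord0 = idx2 false by apply/val_inj; rewrite /= idx2K.
have e1 : (ord_max : 'I_2) = idx2 true by apply/val_inj; rewrite /= idx2K.
rewrite e0 e1 !idx2_eq !idx2K.
by case: a; case: b => /=; rewrite ?mulr0 ?mul0r ?mulr1 ?mul1r ?addr0 ?add0r.
Qed.

Lemma Hm_entry a b :
  Hm R (idx2 a) (idx2 b) = (Num.sqrt 2)^-1 * (if a && b then -1 else 1).
Proof. by rewrite !mxE !idx2K; case: a; case: b. Qed.

Lemma idx4K a b : nat_of_ord (idx4 a b) = (2 * a + b)%N.
Proof. by rewrite /idx4 inordK //; case: a; case: b. Qed.

Lemma CZm_entry a b c d :
  CZm R (idx4 a b) (idx4 c d) = ((a == c) && (b == d))%:R * cz_sign a b.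
Proof.
rewrite mxE -val_eqE /= !idx4K /cz_sign.
by case: a; case: b; case: c; case: d; rewrite /= ?mul1r ?mul0r.
Qed.

Lemma invsqrt2_sqr_mul2 : (Num.sqrt (2 : R))^-1 * (Num.sqrt 2)^-1 * 2 = 1.
Proof. by rewrite -invfM -expr2 sqr_sqrtr ?ler0n // mulVf // pnatr_eq0. Qed.

End Entries.

Section Gates.
Variables (R : rcfType) (n : nat).

Lemma prod_only_at k (x : R) : (0 < k <= n)%N ->
  \prod_(l < n) (if l.+1 == k then x else 1) = x.
Proof.
case: k => // k /andP[_ ltkn].
rewrite (bigD1 (Ordinal ltkn)) //= eqxx big1 ?mulr1 // => l.
by rewrite -val_eqE eqSS /= => /negbTE ->.
Qed.

Lemma oneq_prodmx k (g : 'M[R]_2) : (0 < k <= n)%N ->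
  Defs.oneq n k g = prodmx n (fun k' a b => if k' == k then g (idx2 a) (idx2 b) else delta a b).
Proof.
case: k => // k /andP[_ ltkn]; apply/matrixP => i j; rewrite !mxE.
rewrite [RHS](bigD1 (Ordinal ltkn)) //= eqxx; congr (_ * _).
apply: eq_big => [l|l]; first by rewrite eqSS.
by rewrite eqSS => /negbTE ->.
Qed.

Lemma prod_split2 (F : nat -> R) k : (0 < k < n)%N ->
  \prod_(l < n) F l.+1 =
  F k * (F k.+1 * \prod_(l < n | (l.+1 != k) && (l.+1 != k.+1)) F l.+1).
Proof.
case: k => // k /andP[_ ltkn].
have ltk'n : (k < n)%N by apply: ltnW.
rewrite (bigD1 (Ordinal ltk'n)) //= (bigD1 (Ordinal ltkn)) /=; last first.
  by rewrite -val_eqE /= gtn_eqF.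
by congr (_ * (_ * _)).
Qed.

Lemma twoq_CZm k : (0 < k < n)%N ->
  twoq n k (CZm R) = \matrix_(i, j) (cz_sign (bit i k) (bit i k.+1) * (i == j)%:R).
Proof.
move=> hk; apply/matrixP => i j; rewrite [LHS]mxE [RHS]mxE CZm_entry.
have := congr1 (fun M : 'M[R]_(2 ^ n) => M i j) (prodmx_delta R n).
rewrite !mxE => <-; rewrite (@prod_split2 (fun l => (bit i l == bit j l)%:R) k) //.
by rewrite /cz_sign; case: (bit i k) (bit j k) (bit i k.+1) (bit j k.+1) => [] [] [] [];
  rewrite /= ?mul1r ?mul0r ?mulr0 ?mulr1 ?mulrA.
Qed.

End Gates.
(* A signed Pauli operator: the sign bit [s] stands for [(-1) ^+ s] and [q k]
   is the letter on qubit [k]; only qubits [1..n] are significant. *)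
Definition pstate := (bool * (nat -> pauli))%type.

Definition upd (q : nat -> pauli) (k : nat) (p : pauli) : nat -> pauli :=
  fun j => if j == k then p else q j.

(* Conjugation tables: a gate maps the letter(s) [p] to [(-1) ^+ e] times the
   letter(s) [p'], returned as [(e, p')]. *)
Definition H_pconj (p : pauli) : bool * pauli :=
  match p with pI => (false, pI) | pX => (false, pZ) | pZ => (false, pX) | pXZ => (true, pXZ) end.

Definition Z_pconj (p : pauli) : bool * pauli :=
  match p with pI => (false, pI) | pX => (true, pX) | pZ => (false, pZ) | pXZ => (true, pXZ) end.

Definition CZ_pconj (p1 p2 : pauli) : bool * pauli * pauli :=
  match p1, p2 with
  | pI, pI => (false, pI, pI)   | pI, pX => (false, pZ, pX)
  | pI, pZ => (false, pI, pZ)   | pI, pXZ => (false, pZ, pXZ)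
  | pX, pI => (false, pX, pZ)   | pX, pX => (true, pXZ, pXZ)
  | pX, pZ => (false, pX, pI)   | pX, pXZ => (true, pXZ, pX)
  | pZ, pI => (false, pZ, pI)   | pZ, pX => (false, pI, pX)
  | pZ, pZ => (false, pZ, pZ)   | pZ, pXZ => (false, pI, pXZ)
  | pXZ, pI => (false, pXZ, pZ) | pXZ, pX => (true, pX, pXZ)
  | pXZ, pZ => (false, pXZ, pI) | pXZ, pXZ => (true, pX, pX)
  end.

(* [pmat p * pmat p' = (-1) ^+ e * pmat p''] for [pmul p p' = (e, p'')] *)
Definition pmul (p p' : pauli) : bool * pauli :=
  match p, p' with
  | pI, p' => (false, p')       | p, pI => (false, p)
  | pX, pX => (false, pI)       | pX, pZ => (false, pXZ)   | pX, pXZ => (false, pZ)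
  | pZ, pX => (true, pXZ)       | pZ, pZ => (false, pI)    | pZ, pXZ => (true, pX)
  | pXZ, pX => (true, pZ)       | pXZ, pZ => (false, pX)   | pXZ, pXZ => (true, pI)
  end.

Section PauliMatrix.
Variables (R : rcfType) (n : nat).

Definition pauli_mx (st : pstate) : 'M[R]_(2 ^ n) :=
  (-1) ^+ st.1 *: prodmx n (fun k => pentry (st.2 k)).

Lemma oneq_pauli_mx_comm k (g : 'M[R]_2) s q (e : bool) p' : (0 < k <= n)%N ->
  (forall a b, g (idx2 a) (idx2 false) * pentry (q k) false b +
               g (idx2 a) (idx2 true) * pentry (q k) true b =
     (-1) ^+ e * (pentry p' a false * g (idx2 false) (idx2 b) +
                  pentry p' a true * g (idx2 true) (idx2 b))) ->
  Defs.oneq n k g *m pauli_mx (s, q) =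
  pauli_mx (s (+) e, upd q k p') *m Defs.oneq n k g.
Proof.
move=> hk eq_entries; rewrite oneq_prodmx // /pauli_mx -scalemxAr -scalemxAl.
rewrite !mul_prodmx signr_addb -scalerA; congr (_ *: _).
rewrite -{1}(prod_only_at ((-1) ^+ e) hk).
rewrite -(@prodmx_scalel _ n (fun k' => if k' == k then (-1) ^+ e else 1)).
apply: eq_prodmx => l a b; rewrite /upd /=; case: eqP => [->|_]; first exact: eq_entries.
by rewrite mul1r /delta; case: a; case: b => /=; ring.
Qed.

Lemma twoq_CZm_pauli_mx_comm k s q (e : bool) p1 p2 : (0 < k < n)%N ->
  (forall a1 a2 b1 b2, cz_sign a1 a2 * (pentry (q k) a1 b1 * pentry (q k.+1) a2 b2) =
      (-1) ^+ e * (pentry p1 a1 b1 * pentry p2 a2 b2) * cz_sign b1 b2 :> R) ->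
  twoq n k (CZm R) *m pauli_mx (s, q) =
  pauli_mx (s (+) e, upd (upd q k p1) k.+1 p2) *m twoq n k (CZm R).
Proof.
move=> hk eq_entries; rewrite twoq_CZm //; apply/matrixP => i j; rewrite !mxE.
rewrite (bigD1 i) //= big1 ?addr0; last first.
  by move=> t /negbTE neq_ti; rewrite !mxE eq_sym neq_ti mulr0 mul0r.
rewrite [RHS](bigD1 j) //= [X in _ = _ + X]big1 ?addr0; last first.
  by move=> t /negbTE neq_tj; rewrite !mxE neq_tj !mulr0.
rewrite !mxE !eqxx !mulr1 signr_addb.
rewrite (@prod_split2 _ _ (fun l => pentry (q l) (bit i l) (bit j l)) k) //.
rewrite (@prod_split2 _ _ (fun l => pentry (upd (upd q k p1) k.+1 p2 l) (bit i l) (bit j l)) k) //.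
have -> : \prod_(l < n | (l.+1 != k) && (l.+1 != k.+1))
     pentry (upd (upd q k p1) k.+1 p2 l.+1) (bit i l.+1) (bit j l.+1) =
   \prod_(l < n | (l.+1 != k) && (l.+1 != k.+1)) pentry (q l.+1) (bit i l.+1) (bit j l.+1) :> R.
  by apply: eq_bigr => l /andP[/negbTE neq_l1 /negbTE neq_l2]; rewrite /upd neq_l1 neq_l2.
rewrite /upd /= (ltn_eqF (ltnSn k)) !eqxx.
set rest := \prod_(_ < n | _) _.
transitivity ((-1) ^+ s * rest *
  (cz_sign (bit i k) (bit i k.+1) * (pentry (q k) (bit i k) (bit j k) *
                                     pentry (q k.+1) (bit i k.+1) (bit j k.+1)))); first by ring.
by rewrite eq_entries; ring.
Qed.

Lemma mul_pauli_mx s q s' q' : pauli_mx (s, q) *m pauli_mx (s', q') =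
  ((-1) ^+ s * (-1) ^+ s' * \prod_(l < n) (-1) ^+ (pmul (q l.+1) (q' l.+1)).1) *:
    prodmx n (fun k => pentry (pmul (q k) (q' k)).2).
Proof.
rewrite /pauli_mx -scalemxAr -scalemxAl mul_prodmx scalerA.
rewrite (_ : prodmx n _ = prodmx n (fun k a b =>
    (-1) ^+ (pmul (q k) (q' k)).1 * pentry (pmul (q k) (q' k)).2 a b)).
  by rewrite prodmx_scalel scalerA (mulrC ((-1) ^+ s')).
apply: eq_prodmx => l a b /=.
by case: (q l.+1); case: (q' l.+1); case: a; case: b => /=; ring.
Qed.

End PauliMatrix.
Inductive gate := GH of nat | GZ of nat | GCZ of nat.

Definition gate_act (g : gate) (st : pstate) : pstate :=
  let: (s, q) := st in
  match g with
  | GH k => let: (e, p) := H_pconj (q k) in (s (+) e, upd q k p)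
  | GZ k => let: (e, p) := Z_pconj (q k) in (s (+) e, upd q k p)
  | GCZ k => let: (e, p1, p2) := CZ_pconj (q k) (q k.+1) in
             (s (+) e, upd (upd q k p1) k.+1 p2)
  end.

Definition gates_act (gs : seq gate) (st : pstate) : pstate :=
  foldl (fun st g => gate_act g st) st gs.

Lemma gates_act_cat gs1 gs2 st :
  gates_act (gs1 ++ gs2) st = gates_act gs2 (gates_act gs1 st).
Proof. exact: foldl_cat. Qed.

Section GateMatrix.
Variables (R : rcfType) (n : nat).

Definition gate_mx (g : gate) : 'M[R]_(2 ^ n) :=
  match g with
  | GH k => Defs.oneq n k (Hm R)
  | GZ k => Defs.oneq n k (Zm R)
  | GCZ k => twoq n k (CZm R)
  end.

Definition gate_valid (g : gate) : bool :=
  match g with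
  | GH k | GZ k => (0 < k <= n)%N
  | GCZ k => (0 < k < n)%N
  end.

Lemma gate_mx_comm g st : gate_valid g ->
  gate_mx g *m pauli_mx R n st = pauli_mx R n (gate_act g st) *m gate_mx g.
Proof.
case: st => s q; case: g => k /= hk.
- case qk: (q k) => /=; apply: oneq_pauli_mx_comm => // a b;
    by rewrite !Hm_entry qk; case: a; case: b => /=; ring.
- case qk: (q k) => /=; apply: oneq_pauli_mx_comm => // a b;
    by rewrite !(pmat_entry R pZ) qk; case: a; case: b => /=; ring.
- case qk: (q k); case qk1: (q k.+1) => /=; apply: twoq_CZm_pauli_mx_comm => // a1 a2 b1 b2;
    by rewrite /cz_sign qk qk1; case: a1; case: a2; case: b1; case: b2 => /=; ring.
Qed.

Lemma gate_mx_invol g : gate_valid g -> gate_mx g *m gate_mx g = 1%:M.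
Proof.
case: g => k /= hk.
- rewrite oneq_prodmx // mul_prodmx -(prodmx_delta R n); apply: eq_prodmx => l a b.
  case: eqP => _; last by rewrite /delta; case: a; case: b => /=; ring.
  have := invsqrt2_sqr_mul2 R; set c := (Num.sqrt 2)^-1 => c2.
  rewrite !Hm_entry -/c /delta; case: a; case: b => /=; try ring;
    by transitivity (c * c * 2); [ring | rewrite c2].
- rewrite oneq_prodmx // mul_prodmx -(prodmx_delta R n); apply: eq_prodmx => l a b.
  case: eqP => _; last by rewrite /delta; case: a; case: b => /=; ring.
  by rewrite !(pmat_entry R pZ) /delta; case: a; case: b => /=; ring.
- rewrite twoq_CZm //; apply/matrixP => i j; rewrite !mxE.
  rewrite (bigD1 i) //= big1 ?addr0; last first.
    by move=> t /negbTE neq_ti; rewrite !mxE eq_sym neq_ti mulr0 mul0r.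
  rewrite !mxE eqxx mulr1 mulrA.
  suff -> : cz_sign (bit i k) (bit i k.+1) * cz_sign (bit i k) (bit i k.+1) = 1 :> R.
    by rewrite mul1r.
  by rewrite /cz_sign; case: (_ && _); rewrite ?mulrNN mulr1.
Qed.

Lemma gate_mx_unit g : gate_valid g -> gate_mx g \in unitmx.
Proof. by move=> valid_g; case: (mulmx1_unit (gate_mx_invol valid_g)). Qed.

Lemma foldl_circ_op (gs : seq 'M[R]_(2 ^ n)) (A : 'M[R]_(2 ^ n)) :
  foldl (fun acc g => g *m acc) A gs = circ_op gs *m A.
Proof.
elim: gs A => [|g gs IH] A /=; first by rewrite mul1mx.
by rewrite IH [in RHS]/circ_op /= IH mulmx1 mulmxA.
Qed.

Lemma circ_op_cons (g : 'M[R]_(2 ^ n)) gs : circ_op (g :: gs) = circ_op gs *m g.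
Proof. by rewrite {1}/circ_op /= foldl_circ_op mulmx1. Qed.

Lemma circ_op_pauli_mx_comm gs st : all gate_valid gs ->
  circ_op (map gate_mx gs) *m pauli_mx R n st =
  pauli_mx R n (gates_act gs st) *m circ_op (map gate_mx gs).
Proof.
elim: gs st => [|g gs IH] st /=; first by rewrite /circ_op /= mul1mx mulmx1.
case/andP=> valid_g valid_gs.
by rewrite circ_op_cons -mulmxA gate_mx_comm // mulmxA IH // -mulmxA.
Qed.

Lemma circ_op_unit gs : all gate_valid gs -> circ_op (map gate_mx gs) \in unitmx.
Proof.
elim: gs => [|g gs IH] /=; first by rewrite /circ_op /= unitmx1.
by case/andP=> valid_g valid_gs; rewrite circ_op_cons unitmx_mul IH // gate_mx_unit.
Qed.

Lemma conjm_circ_op gs st : all gate_valid gs ->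
  conjm (circ_op (map gate_mx gs)) (pauli_mx R n st) = pauli_mx R n (gates_act gs st).
Proof.
by move=> valid_gs; rewrite /conjm circ_op_pauli_mx_comm // mulmxK // circ_op_unit.
Qed.

Lemma conjm_inj (C X Y : 'M[R]_(2 ^ n)) : C \in unitmx -> conjm C X = conjm C Y -> X = Y.
Proof.
move=> unit_C; rewrite /conjm => /(congr1 (mulmx^~ C)); rewrite !mulmxKV //.
by move/(congr1 (mulmx (invmx C))); rewrite !mulKmx.
Qed.

End GateMatrix.
Inductive lgate := LH1 | LH2 | LCZ.

Definition place (k : nat) (g : lgate) : gate :=
  match g with LH1 => GH k | LH2 => GH k.+1 | LCZ => GCZ k end.

Definition lgate_act (g : lgate) (t : bool * pauli * pauli) : bool * pauli * pauli :=
  let: (s, p1, p2) := t in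
  match g with
  | LH1 => let: (e, p) := H_pconj p1 in (s (+) e, p, p2)
  | LH2 => let: (e, p) := H_pconj p2 in (s (+) e, p1, p)
  | LCZ => let: (e, p1', p2') := CZ_pconj p1 p2 in (s (+) e, p1', p2')
  end.

Definition lgates_act (gs : seq lgate) t := foldl (fun t g => lgate_act g t) t gs.

Lemma upd2_eq (q q' : nat -> pauli) k p1 p2 :
  (forall j, j != k -> j != k.+1 -> q' j = q j) ->
  upd (upd q' k p1) k.+1 p2 = upd (upd q k p1) k.+1 p2.
Proof.
move=> eq_off; apply: functional_extensionality => j; rewrite /upd.
by case: eqVneq => // neq_j1; case: eqVneq => // neq_j; apply: eq_off.
Qed.

Lemma gates_act_place gs s q k :
  gates_act (map (place k) gs) (s, q) =
  let: (s', p1, p2) := lgates_act gs (s, q k, q k.+1) in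
  (s', upd (upd q k p1) k.+1 p2).
Proof.
elim: gs s q => [|g gs IH] s q /=.
  congr (_, _); apply: functional_extensionality => j; rewrite /upd.
  by case: eqVneq => [->|_] //; case: eqVneq => [->|].
have neq_k1k : (k.+1 == k) = false by rewrite gtn_eqF.
have neq_kk1 : (k == k.+1) = false by rewrite ltn_eqF.
case: g => /=.
- case: (H_pconj (q k)) => e p /=; rewrite IH /upd eqxx neq_k1k.
  case: lgates_act => [[s' p1] p2]; congr (_, _).
  by rewrite -/(upd _ _ _) (upd2_eq (q := q)) // => j /negbTE ->.
- case: (H_pconj (q k.+1)) => e p /=; rewrite IH /upd eqxx neq_kk1.
  case: lgates_act => [[s' p1] p2]; congr (_, _).
  by rewrite -/(upd _ _ _) (upd2_eq (q := q)) // => j _ /negbTE ->.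
- case: (CZ_pconj (q k) (q k.+1)) => [[e p1'] p2'] /=.
  rewrite IH /upd eqxx neq_k1k neq_kk1 eqxx.
  case: lgates_act => [[s' p1] p2]; congr (_, _).
  rewrite -/(upd _ _ _) -/(upd _ _ _) (upd2_eq (q := q)) // => j neq_j neq_j1.
  by rewrite /upd (negbTE neq_j) (negbTE neq_j1).
Qed.

Definition B_lgates (b : Bsym) : seq lgate :=
  match b with
  | B1 | B5 => [:: LH2; LCZ; LH1; LH2; LCZ; LH1; LH2; LCZ]
  | B2 | B6 => [:: LCZ; LH1; LH2; LCZ]
  | B3 | B7 => [:: LH1; LCZ; LH1; LH2; LCZ]
  | B4 | B8 => [:: LH2; LCZ; LH2; LCZ; LH1; LH2; LCZ]
  end.

Definition ty_pauli (t : ty) : pauli := match t with single => pZ | Defs.double => pXZ end.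

Definition A_letter (a : Asym) : pauli := match a with A1 => pZ | A2 => pX | A3 => pXZ end.

Definition B_letter (b : Bsym) : pauli :=
  match b with B1 | B5 => pI | B2 | B6 => pX | B3 | B7 => pZ | B4 | B8 => pXZ end.

Lemma lgates_act_B b s :
  lgates_act (B_lgates b) (s, B_letter b, ty_pauli (B_in b)) = (s, ty_pauli (B_out b), pI).
Proof. by case: b; case: s. Qed.

Definition A_gates_sym (m : nat) (a : Asym) : seq gate :=
  if a is A2 then [:: GH m] else [::].

Definition C_gates_sym (c : Csym) : seq gate :=
  if c is C2 then [:: GH 1; GZ 1; GH 1] else [::].

Definition zgates_sym (L : zcircuit) : seq gate :=
  A_gates_sym (zm L) (za L)
  ++ flatten [seq map (place k) (B_lgates (zb_at L k)) | k <- rev (iota 1 (zm L).-1)]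
  ++ C_gates_sym (zc L).

Lemma zgates_gate_mx (R : rcfType) n L : zgates R n L = map (gate_mx R n) (zgates_sym L).
Proof.
rewrite /zgates /zgates_sym !map_cat map_flatten -map_comp.
by case: (za L); case: (zc L); congr (_ ++ flatten _ ++ _); apply: eq_map => k /=;
  case: (zb_at L k).
Qed.

Lemma zgates_sym_valid n L : is_zcircuit n L -> all (gate_valid n) (zgates_sym L).
Proof.
case=> /andP[m_gt0 m_le_n] _ _ _.
rewrite /zgates_sym !all_cat all_flatten all_map; apply/and3P; split.
- by case: (za L) => //=; rewrite m_gt0 m_le_n.
- apply/allP => k; rewrite mem_rev mem_iota => hk /=.
  by rewrite all_map; case: (zb_at L k) => /=; lia.
- by case: (zc L) => //=; lia.
Qed.

Definition zpauli (L : zcircuit) : pstate :=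
  (if zc L is C2 then true else false,
   fun l => if (0 < l < zm L)%N then B_letter (zb_at L l)
            else if l == zm L then A_letter (za L) else pI).

(* The state reached from [zpauli L] once the symbols acting above qubit [j]
   have been applied, with the sign [s] of [zpauli L] left untouched. *)
Definition zstage (L : zcircuit) (s : bool) (j : nat) : pstate :=
  (s, fun l => if (0 < l <= j)%N then B_letter (zb_at L l)
               else if l == j.+1 then ty_pauli (out_ty L j.+1) else pI).

Definition Z1_letters (l : nat) : pauli := if l == 1%N then pZ else pI.

Lemma gates_act_A L : (0 < zm L)%N ->
  gates_act (A_gates_sym (zm L) (za L)) (zpauli L) =
  zstage L (zpauli L).1 (zm L).-1.
Proof.
rewrite /zpauli /zstage /out_ty; case: (zm L) => [//|m] _ /=; rewrite eqxx.
case: (za L) => //=; rewrite ltnn eqxx /= addbF; congr (_, _); apply: functional_extensionality => l.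
by rewrite /upd; case: eqVneq => [->|_]; rewrite ?ltnn ?andbF ?eqxx.
Qed.

Lemma gates_act_B L s j :
  (forall k, (1 <= k < zm L)%N -> B_in (zb_at L k) = out_ty L k.+1) ->
  (j < zm L)%N ->
  gates_act (flatten [seq map (place k) (B_lgates (zb_at L k)) | k <- rev (iota 1 j)])
            (zstage L s j) = zstage L s 0.
Proof.
move=> in_out; elim: j => [//|j IH] ltjm.
have -> : rev (iota 1 j.+1) = j.+1 :: rev (iota 1 j).
  by rewrite -[j.+1]addn1 iotaD rev_cat /= add1n addn1.
rewrite /= gates_act_cat /zstage gates_act_place /=.
rewrite ltnSn ltnn eqxx -in_out ?lgates_act_B; last by rewrite ltjm.
apply: etrans (IH (ltnW ltjm)); rewrite /zstage; congr (gates_act _ (_, _)).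
apply: functional_extensionality => l; rewrite /upd /out_ty (ltn_eqF ltjm).
case: eqVneq => [->|_] /=; first by rewrite ifF ?gtn_eqF //; lia.
case: eqVneq => [->|neq_l1]; first by rewrite ltnn andbF.
by congr (if _ then _ else _); lia.
Qed.

Lemma gates_act_zpauli n L :
  is_zcircuit n L -> gates_act (zgates_sym L) (zpauli L) = (false, Z1_letters).
Proof.
case=> /andP[m_gt0 _] _ in_out C_in_out.
rewrite /zgates_sym !gates_act_cat gates_act_A // gates_act_B ?prednK //.
rewrite /zstage -C_in_out /C_in /zpauli /=.
case: (zc L) => /=; congr (_, _); apply: functional_extensionality => l;
  by case: l => [|[|l]].
Qed.
Definition same_pauli (n : nat) (st st' : pstate) : Prop :=
  st.1 = st'.1 /\ forall l : 'I_n, st.2 l.+1 = st'.2 l.+1.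

Section PauliMatrixEq.
Variables (R : rcfType) (n : nat).

Lemma tens_prodmx (F : 'I_n -> 'M[R]_2) f :
  (forall (l : 'I_n) a b, F l (idx2 a) (idx2 b) = f l.+1 a b) -> tens F = prodmx n f.
Proof. by move=> eq_F; apply/matrixP => i j; rewrite !mxE; apply: eq_bigr => l _. Qed.

Lemma in_real_pauli_pauli_mx P : in_real_pauli P -> exists st, P = pauli_mx R n st.
Proof.
case=> s [ps ->]; exists (s, fun k => if insub k.-1 is Some l then ps l else pI).
rewrite /pauli_mx /=; congr (_ *: _); apply: tens_prodmx => l a b.
by rewrite pmat_entry /= valK.
Qed.

Lemma Z1_pauli_mx : Z1 R n = pauli_mx R n (false, Z1_letters).
Proof.
rewrite /pauli_mx /= scale1r; apply: tens_prodmx => l a b.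
rewrite /Z1_letters eqSS; case: eqP => _; first exact: (pmat_entry R pZ).
exact: (pmat_entry R pI).
Qed.

Lemma pauli_mx_pI s q : (forall l : 'I_n, q l.+1 = pI) ->
  pauli_mx R n (s, q) = (-1) ^+ s *: 1%:M.
Proof.
move=> all_pI; rewrite /pauli_mx -(prodmx_delta R n); congr (_ *: _).
by apply: eq_prodmx => l a b /=; rewrite all_pI pentry_pI.
Qed.

Lemma pentry_pmul_trace p p' :
  pentry (pmul p p').2 false false + pentry (pmul p p').2 true true =
  if p == p' then 2 else 0 :> R.
Proof. by case: p; case: p' => /=; ring. Qed.

Lemma mxtrace_mul_pauli_mx s q s' q' :
  \tr (pauli_mx R n (s, q) *m pauli_mx R n (s', q')) =
  (-1) ^+ s * (-1) ^+ s' * \prod_(l < n) (-1) ^+ (pmul (q l.+1) (q' l.+1)).1 *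
  \prod_(l < n) (if q l.+1 == q' l.+1 then 2 else 0).
Proof.
rewrite mul_pauli_mx mxtraceZ mxtrace_prodmx.
by congr (_ * _); apply: eq_bigr => l _; rewrite pentry_pmul_trace.
Qed.

Lemma mxtrace_mul_pauli_mx_neq0 s q s' q' :
  (forall l : 'I_n, q l.+1 = q' l.+1) ->
  \tr (pauli_mx R n (s, q) *m pauli_mx R n (s', q')) != 0.
Proof.
move=> eq_q; rewrite mxtrace_mul_pauli_mx !mulf_neq0 ?signr_eq0 //.
  by apply/prodf_neq0 => l _; rewrite signr_eq0.
by apply/prodf_neq0 => l _; rewrite eq_q eqxx pnatr_eq0.
Qed.

Lemma pauli_mx_eq st st' : pauli_mx R n st = pauli_mx R n st' <-> same_pauli n st st'.
Proof.
case: st st' => [s q] [s' q']; split; last first.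
  by case=> /= -> eq_q; rewrite /pauli_mx; congr (_ *: _); apply: eq_prodmx => l a b /=; rewrite eq_q.
move=> eq_mx; have eq_q : forall l : 'I_n, q l.+1 = q' l.+1.
  move=> l; apply/eqP; apply: contraTT (@mxtrace_mul_pauli_mx_neq0 s q s q (fun=> erefl)) => neq_l.
  rewrite [X in _ *m X]eq_mx mxtrace_mul_pauli_mx.
  rewrite [\prod_(_ < n) (if _ then _ else _)](bigD1 l) //= (negbTE neq_l).
  by rewrite mul0r mulr0 eqxx.
split=> //=; move: eq_mx; have -> : pauli_mx R n (s', q') = pauli_mx R n (s', q).
  by rewrite /pauli_mx; congr (_ *: _); apply: eq_prodmx => l a b /=; rewrite eq_q.
have := @mxtrace_mul_pauli_mx_neq0 false q false q (fun=> erefl).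
move=> /[swap] /(congr1 (fun M => \tr (M *m pauli_mx R n (false, q)))).
rewrite !mxtrace_mul_pauli_mx -!mulrA !expr0 !mul1r => eq_tr nz.
by apply/signr_inj/(mulIf nz).
Qed.

Lemma pauli_mx_sqr1_even st : pauli_mx R n st *m pauli_mx R n st = 1%:M ->
  ~~ odd (\sum_(l < n) (st.2 l.+1 == pXZ))%N.
Proof.
case: st => s q; rewrite mul_pauli_mx /=.
rewrite (eq_prodmx (g := fun _ a b => delta a b)); last first.
  by move=> l a b; case: (q l.+1); case: a; case: b.
rewrite prodmx_delta -signr_addb addbb mul1r.
rewrite -(big_morph (fun k : nat => (-1) ^+ k : R) (@exprD _ _) (expr0 _)).
(* [(XZ)^2 = -1], while every other letter squares to [1] *)
have -> : (\sum_(l < n) (pmul (q l.+1) (q l.+1)).1 = \sum_(l < n) (q l.+1 == pXZ))%N.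
  by apply: eq_bigr => l _; case: (q l.+1).
have i0 : 'I_(2 ^ n) by exists 0%N; rewrite expn_gt0.
move/(congr1 (fun M : 'M[R]_(2 ^ n) => M i0 i0)); rewrite !mxE eqxx mulr1 -signr_odd.
by case: odd => //= /eqP; rewrite expr1 -subr_eq0 -opprD oppr_eq0 (pnatr_eq0 R 2).
Qed.

End PauliMatrixEq.
Definition ty_flip (t : ty) : ty := if t is single then Defs.double else single.

Definition B_of (t : ty) (p : pauli) : Bsym :=
  match t, p with
  | single, pI => B1 | single, pX => B2 | single, pZ => B3 | single, pXZ => B4
  | Defs.double, pI => B5 | Defs.double, pX => B6
  | Defs.double, pZ => B7 | Defs.double, pXZ => B8
  end.

Definition A_of (p : pauli) : Asym := match p with pZ => A1 | pX => A2 | _ => A3 end.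

Lemma B_in_of t p : B_in (B_of t p) = t.
Proof. by case: t; case: p. Qed.

Lemma B_letter_of t p : B_letter (B_of t p) = p.
Proof. by case: t; case: p. Qed.

Lemma B_ofK b : B_of (B_in b) (B_letter b) = b.
Proof. by case: b. Qed.

Lemma B_out_flip b : B_out b = if B_letter b == pXZ then ty_flip (B_in b) else B_in b.
Proof. by case: b. Qed.

Lemma A_out_letter a : A_out a = if A_letter a == pXZ then Defs.double else single.
Proof. by case: a. Qed.

Lemma A_letter_of p : p != pI -> A_letter (A_of p) = p.
Proof. by case: p. Qed.

Lemma A_letter_neq_pI a : A_letter a != pI.
Proof. by case: a. Qed.

Definition xz_ty (q : nat -> pauli) (k m : nat) : ty :=
  if odd (\sum_(k <= l < m.+1) (q l == pXZ))%N then Defs.double else single.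

Lemma xz_ty_top q m : xz_ty q m m = if q m == pXZ then Defs.double else single.
Proof. by rewrite /xz_ty big_nat1; case: (q m == pXZ). Qed.

Lemma xz_ty_step q k m : (k < m)%N ->
  xz_ty q k m = if q k == pXZ then ty_flip (xz_ty q k.+1 m) else xz_ty q k.+1 m.
Proof.
move=> ltkm; rewrite /xz_ty big_ltn 1?ltnW // oddD.
by case: (q k == pXZ) => /=; case: odd.
Qed.

Section ZPauli.
Variable L : zcircuit.

Lemma zpauli_B k : (0 < k < zm L)%N -> (zpauli L).2 k = B_letter (zb_at L k).
Proof. by rewrite /zpauli /= => ->. Qed.

Lemma zpauli_A : (zpauli L).2 (zm L) = A_letter (za L).
Proof. by rewrite /zpauli /= ltnn andbF eqxx. Qed.

Lemma zpauli_above l : (zm L < l)%N -> (zpauli L).2 l = pI.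
Proof. by rewrite /zpauli /= => ltml; rewrite ifF ?gtn_eqF //; lia. Qed.

End ZPauli.

Lemma out_ty_zpauli n L : is_zcircuit n L ->
  forall k, (0 < k <= zm L)%N -> out_ty L k = xz_ty (zpauli L).2 k (zm L).
Proof.
case=> _ _ in_out _.
suff out_ty_below d : (d < zm L)%N -> out_ty L (zm L - d) = xz_ty (zpauli L).2 (zm L - d) (zm L).
  by move=> k hk; rewrite -(subKn (proj2 (andP hk))) out_ty_below //; lia.
elim: d => [|d IH] ltdm.
  by rewrite subn0 /out_ty eqxx xz_ty_top zpauli_A A_out_letter.
have k_eq : (zm L - d = (zm L - d.+1).+1)%N by lia.
rewrite /out_ty ifF; last by lia.
rewrite B_out_flip in_out; last by lia.
rewrite (xz_ty_step _ (m := zm L)); last by lia.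
rewrite -k_eq /out_ty in IH *.
by rewrite IH 1?ltnW // zpauli_B //; lia.
Qed.

Lemma zm_le n L L' : is_zcircuit n L ->
  (forall l : 'I_n, (zpauli L).2 l.+1 = (zpauli L').2 l.+1) -> (zm L <= zm L')%N.
Proof.
case=> /andP[m_gt0 m_le_n] _ _ _ eq_q; rewrite leqNgt; apply/negP => lt_m'm.
have lt_m1 : ((zm L).-1 < n)%N by lia.
have := eq_q (Ordinal lt_m1); rewrite prednK // zpauli_A zpauli_above //.
by apply/eqP/A_letter_neq_pI.
Qed.

Lemma A_letter_inj : injective A_letter.
Proof. by case; case. Qed.

Lemma eq_xz_ty q q' k m : (forall l, (k <= l <= m)%N -> q l = q' l) ->
  xz_ty q k m = xz_ty q' k m.
Proof.
move=> eq_q; rewrite /xz_ty big_nat_cond [in RHS]big_nat_cond.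
by congr (if odd _ then _ else _); apply: eq_bigr => l /andP[/andP[le_kl lt_lm] _]; rewrite eq_q ?le_kl.
Qed.

Lemma zb_at_zpauli n L k : is_zcircuit n L -> (0 < k < zm L)%N ->
  zb_at L k = B_of (xz_ty (zpauli L).2 k.+1 (zm L)) ((zpauli L).2 k).
Proof.
move=> zL hk; have [_ _ in_out _] := zL.
by rewrite -(B_ofK (zb_at L k)) in_out // (out_ty_zpauli zL) ?zpauli_B //; lia.
Qed.

Lemma zcircuit_ext L L' :
  zm L = zm L' -> za L = za L' -> zb L = zb L' -> zc L = zc L' -> L = L'.
Proof. by case: L; case: L' => /= ? ? ? ? ? ? ? ? -> -> -> ->. Qed.

Lemma zpauli_inj n L L' : is_zcircuit n L -> is_zcircuit n L' ->
  same_pauli n (zpauli L) (zpauli L') -> L = L'.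
Proof.
move=> zL zL' [eq_s eq_q].
have eq_m : zm L = zm L'.
  by apply/eqP; rewrite eqn_leq (zm_le zL eq_q) (zm_le zL') // => l; rewrite eq_q.
have [/andP[m_gt0 m_le_n] size_b _ _] := zL; have [_ size_b' _ _] := zL'.
have eq_letters l : (0 < l <= zm L)%N -> (zpauli L).2 l = (zpauli L').2 l.
  case: l => // l /andP[_ le_lm]; have lt_ln : (l < n)%N by lia.
  exact: (eq_q (Ordinal lt_ln)).
have eq_b k : (0 < k < zm L)%N -> zb_at L k = zb_at L' k.
  move=> hk; rewrite (zb_at_zpauli zL hk) (zb_at_zpauli zL') -?eq_m // eq_letters; last by lia.
  by congr B_of; apply: eq_xz_ty => l hl; apply: eq_letters; lia.
apply: zcircuit_ext => //.
- by apply: A_letter_inj; rewrite -!zpauli_A -eq_m eq_letters //; lia.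
- apply: (@eq_from_nth _ B1) => [|i]; first by rewrite size_b size_b' eq_m.
  by rewrite size_b => lt_i; apply: (eq_b i.+1); lia.
- by move: eq_s; rewrite /zpauli /=; case: (zc L); case: (zc L').
Qed.

Definition zcircuit_of (s : bool) (m : nat) (q : nat -> pauli) : zcircuit :=
  ZCircuit m (A_of (q m)) [seq B_of (xz_ty q k.+1 m) (q k) | k <- iota 1 m.-1]
           (if s then C2 else C1).

Section ZCircuitOf.
Variables (s : bool) (m : nat) (q : nat -> pauli).
Hypothesis qm_neq_pI : q m != pI.

Lemma zb_at_of k : (0 < k < m)%N -> zb_at (zcircuit_of s m q) k = B_of (xz_ty q k.+1 m) (q k).
Proof.
move=> hk; rewrite /zb_at /= (nth_map 0%N) ?size_iota ?nth_iota; try lia.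
by rewrite add1n prednK //; case/andP: hk.
Qed.

Lemma out_ty_of k : (0 < k <= m)%N -> out_ty (zcircuit_of s m q) k = xz_ty q k m.
Proof.
move=> hk; rewrite /out_ty /=; case: eqVneq => [->|neq_km].
  by rewrite xz_ty_top A_out_letter A_letter_of.
by rewrite zb_at_of ?B_out_flip ?B_letter_of ?B_in_of -?xz_ty_step //; lia.
Qed.

Lemma is_zcircuit_of n : (0 < m <= n)%N ->
  ~~ odd (\sum_(1 <= l < m.+1) (q l == pXZ))%N -> is_zcircuit n (zcircuit_of s m q).
Proof.
move=> hm even_xz; split => /=.
- exact: hm.
- by rewrite size_map size_iota.
- by move=> k hk; rewrite zb_at_of ?B_in_of ?out_ty_of //; lia.
- by rewrite out_ty_of /xz_ty ?(negbTE even_xz) //; lia.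
Qed.

Lemma zpauli_of : (zpauli (zcircuit_of s m q)).1 = s /\
  forall l, (0 < l <= m)%N -> (zpauli (zcircuit_of s m q)).2 l = q l.
Proof.
split; first by case: s.
move=> l /andP[l_gt0 le_lm]; rewrite /zpauli /= l_gt0 /=; case: ltnP => [lt_lm | le_ml].
  by rewrite zb_at_of ?B_letter_of //; lia.
have -> : l = m by lia.
by rewrite eqxx A_letter_of.
Qed.

End ZCircuitOf.

Lemma zpauli_surj n st : (exists l : 'I_n, st.2 l.+1 != pI) ->
  ~~ odd (\sum_(l < n) (st.2 l.+1 == pXZ))%N ->
  exists L, is_zcircuit n L /\ same_pauli n (zpauli L) st.
Proof.
case: st => s q /= [l0 ql0] even_xz.
pose nontriv k := (0 < k <= n)%N && (q k != pI).
have ex_nontriv : exists k, nontriv k by exists l0.+1; rewrite /nontriv ql0 ltn_ord.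
have nontriv_le k : nontriv k -> (k <= n)%N by case/andP=> /andP[].
case: (ex_maxnP ex_nontriv nontriv_le) => m /andP[hm qm] m_max.
have q_above l : (m < l <= n)%N -> q l = pI.
  move=> /andP[lt_ml le_ln]; have l_gt0 : (0 < l)%N by lia.
  apply/eqP; apply: contraTT lt_ml => nq.
  by rewrite -leqNgt m_max // /nontriv nq l_gt0 le_ln.
exists (zcircuit_of s m q); have [zs zq] := zpauli_of s qm; split.
  apply: is_zcircuit_of => //; move: even_xz.
  rewrite big_add1 /= -(big_mkord xpredT (fun l => (q l.+1 == pXZ) : nat)).
  rewrite (big_cat_nat _ (n := m) (m := 0)) /=; try lia.
  rewrite [X in (_ + X)%N]big1_seq ?addn0 // => l /andP[_].
  by rewrite mem_index_iota => hl; rewrite q_above //; lia.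
split=> // l; case: (leqP l.+1 m) => hl; first by rewrite zq.
by rewrite zpauli_above //= q_above // hl ltn_ord.
Qed.
Lemma zcircuit_conj_zpauli (R : rcfType) n L : is_zcircuit n L ->
  conjm (circ_op (zgates R n L)) (pauli_mx R n (zpauli L)) = Z1 R n.
Proof.
move=> zL; rewrite zgates_gate_mx conjm_circ_op ?zgates_sym_valid //.
by rewrite (gates_act_zpauli zL) Z1_pauli_mx.
Qed.

Lemma zgates_unit (R : rcfType) n L : is_zcircuit n L -> circ_op (zgates R n L) \in unitmx.
Proof. by move=> zL; rewrite zgates_gate_mx circ_op_unit ?zgates_sym_valid. Qed.

Lemma pauli_mx_nontrivial (R : rcfType) n st :
  pauli_mx R n st <> 1%:M -> pauli_mx R n st <> - 1%:M -> exists l : 'I_n, st.2 l.+1 != pI.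
Proof.
case: st => s q neq1 neqN1; apply/existsP; rewrite -negb_forall; apply/negP => /forallP all_pI.
move: neq1 neqN1; rewrite pauli_mx_pI => [|l]; last exact/eqP/all_pI.
by case: (s); rewrite ?expr1 ?expr0 ?scaleN1r ?scale1r.
Qed.

Theorem proposition4p11 (R : rcfType) (n : nat) (P : 'M[R]_(2 ^ n)) :
  (1 <= n)%N ->
  in_real_pauli P ->
  P *m P = 1%:M ->
  P <> 1%:M -> P <> - 1%:M ->
  exists! L : zcircuit,
    is_zcircuit n L /\ conjm (circ_op (zgates R n L)) P = Z1 R n.
Proof.
(* [1 <= n] is unused: it follows from [P <> 1] and [P <> -1]. *)
move=> _ /in_real_pauli_pauli_mx [st ->] sqr1 neq1 neqN1.
have [L [zL sameL]] := zpauli_surj (pauli_mx_nontrivial neq1 neqN1) (pauli_mx_sqr1_even sqr1).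
have eqL : pauli_mx R n st = pauli_mx R n (zpauli L) by apply/esym/pauli_mx_eq.
exists L; split; first by rewrite eqL zcircuit_conj_zpauli.
move=> L' [zL' conjL']; apply: (zpauli_inj zL zL'); apply/pauli_mx_eq.
apply: (conjm_inj (zgates_unit R zL')).
by rewrite -eqL conjL' zcircuit_conj_zpauli.
Qed.
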